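(* Let $(p,m,r)\in\mathbb{Z}_{\ge0}^3$ with $2p+m+r=n$. Then the variety $\mathscr{Z}_{p,m,r}$ is irreducible, and $\mathscr{Z}_{p,m,r}$ equals the Zariski closure of the image of the morphism $\phi_{p,m,r}:GL_n(\mathbb{C})\times\mathbb{C}^{p+m}\times\mathbb{C}^{2p+r}\to\mathscr{Z}_n$ defined by $\phi_{p,m,r}(g,(a_1,\dots,a_{p+m}),(b_1,c_1,\dots,b_p,c_p,b_{p+1},\dots,b_{p+r}))=(gAg^{-1},gBg^{-1})$, where $A=\mathrm{diag}(a_1,-a_1,\dots,a_p,-a_p,a_{p+1},\dots,a_{p+m},0,\dots,0)$ ($r$ zeros) and $B=\mathrm{diag}\left(\begin{bmatrix}0&b_1\\c_1&0\end{bmatrix},\dots,\begin{bmatrix}0&b_p\\c_p&0\end{bmatrix},0,\dots,0,b_{p+1},\dots,b_{p+r}\right)$ (with $m$ zeros).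
   Context: $\mathscr{Z}_n=\{(A,B)\in M_n(\mathbb{C})^2 : AB+BA=0\}$, with $GL_n(\mathbb{C})$ acting by simultaneous conjugation. $\mathscr{Z}_{p,m,r}$ is the Zariski closure in $\mathscr{Z}_n$ of the union of the $GL_n$-orbits of all pairs $(A,B)\in\mathscr{Z}_n$ with $A=\mathrm{diag}(a_1,-a_1,\dots,a_p,-a_p,a_{p+1},\dots,a_{p+m},0,\dots,0)$ ($r$ zeros), where $a_i\in\mathbb{C}^*$ and $a_i\ne\pm a_j$ for $i\ne j$. *)

From mathcomp Require Import all_boot all_algebra.
From Stdlib Require Import Reals.
From mathcomp Require Import Rstruct complex mpoly.

Set Implicit Arguments.
Unset Strict Implicit.
Unset Printing Implicit Defensive.

Import GRing.Theory.
Local Open Scope ring_scope.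

Definition CC : numClosedFieldType := (complex R).

Definition MM (n : nat) := ('M[CC]_n * 'M[CC]_n)%type.

Definition coords (n : nat) (x : MM n) : 'I_(n * n + n * n) -> CC :=
  fun k => (row_mx (mxvec x.1) (mxvec x.2)) 0 k.

Definition polyMM (n : nat) := {mpoly CC[n * n + n * n]}.

Definition vanishes (n : nat) (q : polyMM n) (x : MM n) : Prop :=
  q.@[coords x] = 0.

Definition zariski_closed (n : nat) (S : MM n -> Prop) : Prop :=
  exists F : polyMM n -> Prop,
    forall x, S x <-> (forall q, F q -> vanishes q x).

Definition zariski_closure (n : nat) (T : MM n -> Prop) : MM n -> Prop :=
  fun x => forall q : polyMM n, (forall y, T y -> vanishes q y) -> vanishes q x.

Definition zariski_irreducible (n : nat) (X : MM n -> Prop) : Prop :=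
  (exists x, X x) /\
  forall Y1 Y2 : MM n -> Prop, zariski_closed Y1 -> zariski_closed Y2 ->
    (forall x, X x -> Y1 x \/ Y2 x) ->
    (forall x, X x -> Y1 x) \/ (forall x, X x -> Y2 x).

Definition anticomm (n : nat) (x : MM n) : Prop :=
  x.1 *m x.2 + x.2 *m x.1 = 0.

Definition fnat (k : nat) (a : 'I_k -> CC) (i : nat) : CC :=
  match insub i with Some j => a j | None => 0 end.

(* A = diag(a_1,-a_1,...,a_p,-a_p,a_{p+1},...,a_{p+m},0,...,0)  (0-indexed) *)
Definition diagA (p m r : nat) (a : 'I_(p + m) -> CC) : 'M[CC]_(2 * p + m + r) :=
  \matrix_(i < 2 * p + m + r, j < 2 * p + m + r)
    if i == j then
      (if ltn (nat_of_ord i) (2 * p) then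
         (if odd i then - fnat a i./2 else fnat a i./2)
       else if ltn (nat_of_ord i) (2 * p + m) then fnat a (subn i p)
       else 0)
    else 0.

(* B = diag([0 b_1; c_1 0], ..., [0 b_p; c_p 0], 0,...,0 (m), b_{p+1},...,b_{p+r})
   with parameter vector v = (b_1,c_1,...,b_p,c_p,b_{p+1},...,b_{p+r}) *)
Definition blockB (p m r : nat) (v : 'I_(2 * p + r) -> CC) : 'M[CC]_(2 * p + m + r) :=
  \matrix_(i < 2 * p + m + r, j < 2 * p + m + r)
    if [&& ltn (nat_of_ord i) (2 * p), ltn (nat_of_ord j) (2 * p), i./2 == j./2 & i != j :> nat]
    then fnat v i
    else if (leq (2 * p + m) (nat_of_ord i) && (i == j)) then fnat v (subn i m)
    else 0.

Definition conjpair (n : nat) (g : 'M[CC]_n) (x : MM n) : MM n :=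
  (g *m x.1 *m invmx g, g *m x.2 *m invmx g).

Definition admissible (k : nat) (a : 'I_k -> CC) : Prop :=
  (forall i, a i != 0) /\ (forall i j, i != j -> a i != a j /\ a i != - a j).

Arguments diagA : clear implicits.
Arguments blockB : clear implicits.

Definition orbits_pmr (p m r : nat) : MM (2 * p + m + r) -> Prop :=
  fun x => exists (g : 'M[CC]_(2 * p + m + r)) (a : 'I_(p + m) -> CC)
              (B : 'M[CC]_(2 * p + m + r)),
    [/\ g \in unitmx, admissible a, anticomm (diagA p m r a, B)
      & x = conjpair g (diagA p m r a, B)].

Arguments orbits_pmr : clear implicits.

(* the variety Z_{p,m,r} (closure in M_n(C)^2, which equals the closure in
   the closed subvariety Z_n) *)
Definition Zpmr (p m r : nat) : MM (2 * p + m + r) -> Prop :=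
  zariski_closure (orbits_pmr p m r).

Arguments Zpmr : clear implicits.

Definition phi_image (p m r : nat) : MM (2 * p + m + r) -> Prop :=
  fun x => exists (g : 'M[CC]_(2 * p + m + r)) (a : 'I_(p + m) -> CC)
              (v : 'I_(2 * p + r) -> CC),
    g \in unitmx /\ x = conjpair g (diagA p m r a, blockB p m r v).

Arguments phi_image : clear implicits.

(* Both sides are Zariski closures of sets S in which any two points are joined
   by a segment t |-> g(t) (X(t), Y(t)) g(t)^-1, with g, X, Y affine in t, that
   stays in S wherever g(t) is invertible.  Along such a segment the coordinates
   are polynomials in t divided by det g(t), so a polynomial vanishing on one of
   two closed sets covering S vanishes along the whole segment, and the closure
   of S is irreducible.  The image of phi is such a set: interpolate g, a and b.
   It lies in Z_{p,m,r} because on the segment from a = (1, ..., p+m) to any a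
   admissibility only fails at the roots of a nonzero polynomial.  Conversely,
   if a is admissible and AB = -BA, then B_ij = 0 unless A_ii + A_jj = 0, which
   puts B into the block shape of phi except for an arbitrary r x r block on the
   kernel of A.  On the segment from diag(1, ..., r) to that block, the
   characteristic polynomial is separable, so the block is diagonalizable, off
   the roots of its discriminant; hence every orbit lies in the closure of the
   image of phi. *)

From mathcomp Require Import all_boot all_algebra.
From Stdlib Require Import Reals.
From mathcomp Require Import Rstruct complex mpoly.
From mathcomp Require Import separable zify.
From Stdlib Require Import Classical FunctionalExtensionality PropExtensionality.

Set Implicit Arguments.
Unset Strict Implicit.
Unset Printing Implicit Defensive.
Import GRing.Theory Num.Theory.
Local Open Scope ring_scope.

(** * Polynomial curves in M_n(C)^2 *)

Lemma horner_eq0 (R : numDomainType) (P : {poly R}) : (forall t, P.[t] = 0) -> P = 0.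
Proof.
move=> P0; apply/eqP; apply: contraT => nzP.
pose s := [seq (i%:R : R) | i <- iota 0 (size P)].
have rootsP : all (root P) s by apply/allP => x /mapP[i _ ->]; rewrite /root P0.
have uniq_s : uniq s.
  by rewrite map_inj_uniq ?iota_uniq // => i j /eqP; rewrite eqr_nat => /eqP.
by have := max_poly_roots nzP rootsP uniq_s; rewrite size_map size_iota ltnn.
Qed.

Lemma meval_div_horner (F : fieldType) k (q : {mpoly F[k]}) (y : 'I_k -> {poly F})
    (e : {poly F}) :
  exists N : {poly F}, forall t, e.[t] != 0 ->
    q.@[fun i => (y i).[t] / e.[t]] * e.[t] ^+ msize q = N.[t].
Proof.
exists (\sum_(mu <- msupp q)
          q@_mu *: (\prod_i y i ^+ mu i * e ^+ (msize q - mdeg mu))) => t et.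
rewrite mevalE mulr_suml horner_sum.
rewrite big_seq_cond [RHS]big_seq_cond; apply: eq_bigr => mu /andP[mu_q _].
rewrite hornerZ hornerM horner_exp horner_prod -!mulrA; congr (_ * _).
under eq_bigr do rewrite exprMn.
under [in RHS]eq_bigr do rewrite horner_exp.
rewrite big_split /= prodrXr -mdegE -mulrA; congr (_ * _).
have le_mu := ltnW (msize_mdeg_lt mu_q).
by rewrite -{1}(subnK le_mu) exprD mulrCA exprVn mulVf ?mulr1 // expf_neq0.
Qed.

Definition lerpmx m n (t : CC) (A B : 'M[CC]_(m, n)) : 'M[CC]_(m, n) :=
  (1 - t) *: A + t *: B.

Section Lerpmx.
Variables (m n : nat).
Implicit Types A B : 'M[CC]_(m, n).

Lemma lerpmx0 A B : lerpmx 0 A B = A.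
Proof. by rewrite /lerpmx subr0 scale1r scale0r addr0. Qed.

Lemma lerpmx1 A B : lerpmx 1 A B = B.
Proof. by rewrite /lerpmx subrr scale0r scale1r add0r. Qed.

Lemma lerpmxx t A : lerpmx t A A = A.
Proof. by rewrite /lerpmx -scalerDl subrK scale1r. Qed.

Definition segmx A B : 'M[{poly CC}]_(m, n) :=
  (1 - 'X) *: map_mx polyC A + 'X *: map_mx polyC B.

Lemma map_segmx A B t : map_mx (horner_eval t) (segmx A B) = lerpmx t A B.
Proof. by apply/matrixP => i j; rewrite !mxE /horner_eval !hornerE. Qed.

End Lerpmx.

Lemma map_segmx_conj n (g0 g1 X0 X1 : 'M[CC]_n) t :
  map_mx (horner_eval t) (segmx g0 g1 *m segmx X0 X1 *m \adj (segmx g0 g1)) =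
  lerpmx t g0 g1 *m lerpmx t X0 X1 *m \adj (lerpmx t g0 g1).
Proof. by rewrite !map_mxM map_mx_adj !map_segmx. Qed.

Lemma coords_scale n c (X Y : 'M[CC]_n) k : coords (c *: X, c *: Y) k = c * coords (X, Y) k.
Proof. by rewrite /coords /= !linearZ /= -scale_row_mx mxE. Qed.

Lemma coords_map (T : Type) (f : T -> CC) n (X Y : 'M[T]_n) k :
  coords (map_mx f X, map_mx f Y) k = f (row_mx (mxvec X) (mxvec Y) 0 k).
Proof. by rewrite /coords /= -!map_mxvec -map_row_mx mxE. Qed.

Lemma coords_conjpair n (g : 'M[CC]_n) (x : MM n) k : g \in unitmx ->
  coords (conjpair g x) k = coords (g *m x.1 *m \adj g, g *m x.2 *m \adj g) k / \det g.
Proof. by move=> gu; rewrite /conjpair /invmx gu -!scalemxAr coords_scale mulrC. Qed.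

Definition conj_segment n (g0 g1 : 'M[CC]_n) (x0 x1 : MM n) (t : CC) : MM n :=
  conjpair (lerpmx t g0 g1) (lerpmx t x0.1 x1.1, lerpmx t x0.2 x1.2).

Section ConjSegment.
Variables (n : nat) (g0 g1 : 'M[CC]_n) (x0 x1 : MM n).
Local Notation z := (conj_segment g0 g1 x0 x1).
Local Notation e := (\det (segmx g0 g1)).

Lemma conj_segment0 : z 0 = conjpair g0 x0.
Proof. by case: x0 => ? ?; rewrite /conj_segment !lerpmx0. Qed.

Lemma conj_segment1 : z 1 = conjpair g1 x1.
Proof. by case: x1 => ? ?; rewrite /conj_segment !lerpmx1. Qed.

Lemma unitmx_lerpmx t : (lerpmx t g0 g1 \in unitmx) = (e.[t] != 0).
Proof. by rewrite unitmxE unitfE -map_segmx det_map_mx. Qed.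

Lemma meval_conj_segment (q : polyMM n) :
  exists (N : {poly CC}) (D : nat), forall t, e.[t] != 0 ->
    q.@[coords (z t)] * e.[t] ^+ D = N.[t].
Proof.
pose G := segmx g0 g1.
pose y k := row_mx (mxvec (G *m segmx x0.1 x1.1 *m \adj G))
                   (mxvec (G *m segmx x0.2 x1.2 *m \adj G)) 0 k.
(* invmx g = adj g / det g, so the coordinates of z t are the (y k).[t] / e.[t]. *)
have [N HN] := meval_div_horner q y e.
exists N, (msize q) => t et; rewrite -HN //; congr (_ * _); apply: meval_eq => k.
have gu : lerpmx t g0 g1 \in unitmx by rewrite unitmx_lerpmx.
rewrite coords_conjpair // -[e.[t]]horner_evalE -det_map_mx map_segmx.
by rewrite -[(y k).[t]]horner_evalE -coords_map !map_segmx_conj.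
Qed.

Lemma conj_segment_vanish_or (d : {poly CC}) (q1 q2 : polyMM n) : d != 0 ->
  (forall t, lerpmx t g0 g1 \in unitmx -> d.[t] != 0 ->
     vanishes q1 (z t) \/ vanishes q2 (z t)) ->
  (forall t, lerpmx t g0 g1 \in unitmx -> vanishes q1 (z t)) \/
  (forall t, lerpmx t g0 g1 \in unitmx -> vanishes q2 (z t)).
Proof.
move=> nz_d vanish12.
have [e0|nz_e] := eqVneq e 0.
  by left => t; rewrite unitmx_lerpmx e0 horner0 eqxx.
have [N1 [D1 HN1]] := meval_conj_segment q1.
have [N2 [D2 HN2]] := meval_conj_segment q2.
have vanish_N q N D : (forall t, e.[t] != 0 -> q.@[coords (z t)] * e.[t] ^+ D = N.[t]) ->
    N = 0 -> forall t, lerpmx t g0 g1 \in unitmx -> vanishes q (z t).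
  move=> HN N0 t; rewrite unitmx_lerpmx => et; apply/eqP.
  move: (HN t et); rewrite N0 horner0 => /eqP.
  by rewrite mulf_eq0 expf_eq0 (negPf et) andbF orbF.
have : N1 * N2 * (d * e) = 0.
  apply: horner_eq0 => t; rewrite !hornerM.
  have [->|dt] := eqVneq d.[t] 0; first by rewrite mul0r mulr0.
  have [->|et] := eqVneq e.[t] 0; first by rewrite !mulr0.
  have gt : lerpmx t g0 g1 \in unitmx by rewrite unitmx_lerpmx.
  rewrite -(HN1 t et) -(HN2 t et).
  by case: (vanish12 t gt dt) => v; rewrite v !(mul0r, mulr0).
move/eqP; rewrite !mulf_eq0 (negPf nz_d) (negPf nz_e) !orbF => /orP[] /eqP N0.
  by left; apply: vanish_N HN1 N0.
by right; apply: vanish_N HN2 N0.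
Qed.

Lemma conj_segment_closure (S : MM n -> Prop) (d : {poly CC}) : d != 0 ->
  (forall t, lerpmx t g0 g1 \in unitmx -> d.[t] != 0 -> S (z t)) ->
  forall t, lerpmx t g0 g1 \in unitmx -> zariski_closure S (z t).
Proof.
move=> nz_d Sz t gt q vq.
have vanish_q u : lerpmx u g0 g1 \in unitmx -> d.[u] != 0 ->
    vanishes q (z u) \/ vanishes q (z u).
  by move=> gu du; left; apply: vq; apply: Sz.
by case: (conj_segment_vanish_or nz_d vanish_q) => /(_ t gt).
Qed.

End ConjSegment.

Lemma sub_zariski_closure n (S : MM n -> Prop) x : S x -> zariski_closure S x.
Proof. by move=> Sx q; apply. Qed.

Lemma zariski_closure_closed n (S : MM n -> Prop) : zariski_closed (zariski_closure S).
Proof. by exists (fun q => forall y, S y -> vanishes q y). Qed.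

Lemma zariski_closure_min n (S Y : MM n -> Prop) : zariski_closed Y ->
  (forall x, S x -> Y x) -> forall x, zariski_closure S x -> Y x.
Proof.
move=> [F HY] SY x clx; apply/HY => q Fq.
by apply: clx => y Sy; apply: (iffLR (HY y)) Fq; apply: SY.
Qed.

Lemma zariski_closure_eq n (S T : MM n -> Prop) :
  (forall x, S x -> zariski_closure T x) -> (forall x, T x -> zariski_closure S x) ->
  zariski_closure S = zariski_closure T.
Proof.
move=> ST TS; apply: functional_extensionality => x; apply: propositional_extensionality.
by split; apply: zariski_closure_min => //; apply: zariski_closure_closed.
Qed.

Definition segment_connected n (S : MM n -> Prop) : Prop :=
  forall x0 x1, S x0 -> S x1 -> exists g0 g1 y0 y1,
    [/\ g0 \in unitmx, g1 \in unitmx, x0 = conjpair g0 y0, x1 = conjpair g1 y1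
      & forall t, lerpmx t g0 g1 \in unitmx -> S (conj_segment g0 g1 y0 y1 t)].

Lemma segment_connected_irreducible n (S : MM n -> Prop) :
  (exists x, S x) -> segment_connected S -> zariski_irreducible (zariski_closure S).
Proof.
move=> [x Sx] join; split; first by exists x; apply: sub_zariski_closure.
move=> Y1 Y2 [F1 HY1] [F2 HY2] cover.
have escape Y F : (forall x, Y x <-> forall q, F q -> vanishes q x) ->
    (forall x, zariski_closure S x -> Y x) \/ exists q y, [/\ F q, S y & ~ vanishes q y].
  move=> HY; have [SY|] := classic (forall y, S y -> Y y).
    by left; apply: zariski_closure_min SY; exists F.
  move=> /not_all_ex_not[y nSYy]; have [Sy nYy] := imply_to_and _ _ nSYy; right.
  have /not_all_ex_not[q nFq] : ~ forall q, F q -> vanishes q y by move=> vy; apply/nYy/HY.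
  have [Fq nv] := imply_to_and _ _ nFq.
  by exists q, y.
have [|[q1 [y1 [F1q1 Sy1 nv1]]]] := escape _ _ HY1; first by left.
have [|[q2 [y2 [F2q2 Sy2 nv2]]]] := escape _ _ HY2; first by right.
have [g0 [g1 [w0 [w1 [g0u g1u def_y1 def_y2 Sz]]]]] := join _ _ Sy1 Sy2.
have vanish12 t : lerpmx t g0 g1 \in unitmx -> 1.[t] != 0 ->
    vanishes q1 (conj_segment g0 g1 w0 w1 t) \/ vanishes q2 (conj_segment g0 g1 w0 w1 t).
  move=> gt _; have [/HY1 v|/HY2 v] := cover _ (sub_zariski_closure (Sz t gt)).
    by left; apply: v.
  by right; apply: v.
case: (conj_segment_vanish_or (oner_neq0 _) vanish12) => [/(_ 0)|/(_ 1)].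
  by rewrite conj_segment0 lerpmx0 -def_y1 => /(_ g0u).
by rewrite conj_segment1 lerpmx1 -def_y2 => /(_ g1u).
Qed.

(** * The parametrisation phi *)

Definition lerpv k (t : CC) (a0 a1 : 'I_k -> CC) : 'I_k -> CC :=
  fun i => (1 - t) * a0 i + t * a1 i.

Lemma fnat_lt k (a : 'I_k -> CC) (i : nat) (ltik : (i < k)%nat) : fnat a i = a (Ordinal ltik).
Proof. by rewrite /fnat insubT. Qed.

Lemma fnat_lerpv k t (a0 a1 : 'I_k -> CC) i :
  fnat (lerpv t a0 a1) i = (1 - t) * fnat a0 i + t * fnat a1 i.
Proof. by rewrite /fnat; case: insub => [j|] //; rewrite !mulr0 addr0. Qed.

Lemma diagA_lerpv p m r t (a0 a1 : 'I_(p + m) -> CC) :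
  diagA p m r (lerpv t a0 a1) = lerpmx t (diagA p m r a0) (diagA p m r a1).
Proof.
apply/matrixP => i j; rewrite /lerpmx !mxE !fnat_lerpv.
case: eqP => _; last by rewrite !mulr0 addr0.
case: ifP => _; last by case: ifP => _; rewrite ?mulr0 ?addr0.
by case: odd; rewrite // opprD -!mulrN.
Qed.

Lemma blockB_lerpv p m r t (v0 v1 : 'I_(2 * p + r) -> CC) :
  blockB p m r (lerpv t v0 v1) = lerpmx t (blockB p m r v0) (blockB p m r v1).
Proof.
apply/matrixP => i j; rewrite /lerpmx !mxE !fnat_lerpv.
by case: ifP => _ //; case: ifP => _ //; rewrite !mulr0 addr0.
Qed.

Lemma diagA_is_diag p m r a : is_diag_mx (diagA p m r a).
Proof.
by apply/is_diag_mxP => i j ne_ij; rewrite mxE ifN //; apply: contra ne_ij => /eqP ->.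
Qed.

Lemma anticomm_diag n (D B : 'M[CC]_n) : is_diag_mx D ->
  anticomm (D, B) <-> forall i j, (D i i + D j j) * B i j = 0.
Proof.
case/diag_mxP => d ->; have Dii i : diag_mx d i i = d 0 i by rewrite mxE eqxx mulr1n.
rewrite /anticomm /= mul_diag_mx mul_mx_diag; split => [/matrixP AB i j|AB].
  by move: (AB i j); rewrite !Dii !mxE mulrDl [B i j * _]mulrC.
by apply/matrixP => i j; rewrite !mxE [B i j * _]mulrC -mulrDl -!Dii AB.
Qed.

Definition diagA_index p (i : nat) : nat := if (i < 2 * p)%nat then i./2 else (i - p)%nat.

Definition diagA_sign p (i : nat) : bool := (i < 2 * p)%nat && odd i.

Lemma diagA_index_lt p m (i : nat) : (i < 2 * p + m)%nat -> (diagA_index p i < p + m)%nat.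
Proof.
by rewrite /diagA_index; case: ifP => lt_i; [rewrite ltn_half_double in lt_i *|]; lia.
Qed.

Lemma diagA_entry p m r a (i : 'I_(2 * p + m + r)) : (i < 2 * p + m)%nat ->
  diagA p m r a i i = (-1) ^+ diagA_sign p i * fnat a (diagA_index p i).
Proof.
rewrite mxE eqxx /diagA_sign /diagA_index /= => ->.
by case: ifP => //= _; case: odd; rewrite ?expr1 ?mulN1r ?expr0 ?mul1r.
Qed.

Lemma diagA_entry0 p m r a (i : 'I_(2 * p + m + r)) : (2 * p + m <= i)%nat ->
  diagA p m r a i i = 0.
Proof.
move=> le_i; rewrite mxE eqxx /=.
by rewrite ifN ?ifN // -leqNgt // (leq_trans _ le_i) ?leq_addr.
Qed.

Lemma odd_half_partner (i j : nat) : i./2 = j./2 -> i != j -> odd j = ~~ odd i.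
Proof.
move=> eq_half neq_ij; move: (odd_double_half i) (odd_double_half j).
rewrite eq_half; move: (j./2) => k.
by case: (odd i); case: (odd j) => //= Ei Ej; move: neq_ij; rewrite -Ei -Ej eqxx.
Qed.

Lemma anticomm_diagA_blockB p m r a v : anticomm (diagA p m r a, blockB p m r v).
Proof.
apply/anticomm_diag; first exact: diagA_is_diag.
move=> i j; rewrite [blockB _ _ _ _ i j]mxE.
case: ifP => [/and4P[ip jp /eqP eq_half neq_ij]|_].
  move: ip jp => /= ip jp.
  have lt_ip k : (k < 2 * p)%nat -> (k < 2 * p + m)%nat by move=> ?; lia.
  rewrite !diagA_entry ?lt_ip // /diagA_sign /diagA_index ip jp /=.
  rewrite (odd_half_partner eq_half neq_ij) eq_half.
  by case: (odd i); rewrite ?expr1 ?expr0 ?mulN1r ?mul1r ?subrr ?addNr mul0r.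
case: ifP => [/andP[le_i /eqP <-]|_]; last by rewrite mulr0.
by rewrite diagA_entry0 // addr0 mul0r.
Qed.

Lemma admissible_succ k : admissible (fun i : 'I_k => (i.+1)%:R : CC).
Proof.
split=> [i|i j ne_ij]; first by rewrite pnatr_eq0.
by rewrite eqr_nat eqSS -addr_eq0 -natrD pnatr_eq0 addnS.
Qed.

Definition adm_disc (R : comNzRingType) k (a : 'I_k -> R) : R :=
  \prod_i (a i * \prod_(j | j != i) ((a i - a j) * (a i + a j))).

Lemma admissible_adm_disc k (a : 'I_k -> CC) : admissible a <-> adm_disc a != 0.
Proof.
split=> [[nz_a sep_a]|/prodf_neq0 nz_prod].
  apply/prodf_neq0 => i _; rewrite mulf_neq0 //; apply/prodf_neq0 => j ne_ji.
  have [ne1 ne2] : a i != a j /\ a i != - a j by apply: sep_a; rewrite eq_sym.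
  by rewrite mulf_neq0 ?subr_eq0 ?addr_eq0.
have nz_factor i : a i != 0 /\ \prod_(j | j != i) ((a i - a j) * (a i + a j)) != 0.
  by apply/andP; rewrite -negb_or -mulf_eq0; apply: nz_prod.
split=> [i|i j ne_ij]; first exact: (nz_factor i).1.
have /prodf_neq0/(_ j) := (nz_factor i).2.
by rewrite eq_sym ne_ij mulf_eq0 negb_or subr_eq0 addr_eq0 => /(_ isT) /andP.
Qed.

Lemma horner_adm_disc (R : comNzRingType) k (A : 'I_k -> {poly R}) (a : 'I_k -> R) t :
  (forall i, (A i).[t] = a i) -> (adm_disc A).[t] = adm_disc a.
Proof.
move=> Aa; rewrite /adm_disc horner_prod; apply: eq_bigr => i _.
rewrite hornerM horner_prod Aa; congr (_ * _); apply: eq_bigr => j _.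
by rewrite !hornerE !Aa.
Qed.

Lemma admissible_segment k (a0 a1 : 'I_k -> CC) : admissible a0 ->
  exists d : {poly CC}, d != 0 /\ forall t, d.[t] != 0 -> admissible (lerpv t a0 a1).
Proof.
move=> /admissible_adm_disc adm0.
pose A i := (1 - 'X) * (a0 i)%:P + 'X * (a1 i)%:P.
have AE t i : (A i).[t] = lerpv t a0 a1 i by rewrite /A !hornerE.
exists (adm_disc A); split => [|t dt].
  have A0 : (adm_disc A).[0] = adm_disc a0.
    by apply: horner_adm_disc => i; rewrite AE /lerpv subr0 mul1r mul0r addr0.
  by apply: contraNneq adm0 => A_0; rewrite -A0 A_0 horner0.
by apply/admissible_adm_disc; rewrite -(horner_adm_disc (AE t)).
Qed.

(** * Diagonalisation off a discriminant *)

Definition char_disc (R : comNzRingType) n (M : 'M[R]_n) : R :=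
  resultant (char_poly M) (char_poly M)^`().

Lemma char_disc_neq0 (R : idomainType) n (M : 'M[R]_n) :
  (char_disc M != 0) = separable_poly (char_poly M).
Proof.
have : (0 < size (gcdp (char_poly M) (char_poly M)^`()))%nat.
  by rewrite size_poly_gt0 gcdp_eq0 negb_and monic_neq0 // char_poly_monic.
by rewrite /char_disc resultant_eq0 unlock /coprimep; case: size => [|[|s]].
Qed.

Lemma char_disc_diag_mx (R : idomainType) n (D : 'rV[R]_n) :
  injective (D 0) -> char_disc (diag_mx D) != 0.
Proof.
move=> injD; rewrite char_disc_neq0 char_poly_trig ?diag_mx_is_trig //.
under eq_bigr do rewrite mxE eqxx mulr1n.
rewrite -(big_map (D 0) xpredT (fun x => 'X - x%:P)) separable_prod_XsubC.
by rewrite map_inj_uniq ?index_enum_uniq.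
Qed.

Lemma diagonalizable_char_disc (F : closedFieldType) n (M : 'M[F]_n) :
  char_disc M != 0 -> diagonalizable M.
Proof.
case: n M => [|n] M; first by rewrite (thinmx0 M) => _; apply: diagonalizable0.
rewrite char_disc_neq0 => sepM.
have [rs Ers] := closed_field_poly_normal (char_poly M).
rewrite (monicP (char_poly_monic M)) scale1r in Ers.
apply/diagonalizableP; exists rs; first by rewrite -separable_prod_XsubC -Ers.
by rewrite -Ers mxminpoly_dvd_char.
Qed.

Lemma lead_coef_deriv_char_poly (R : comNzRingType) n (M : 'M[R]_n.+1) :
  n.+1%:R != 0 :> R -> lead_coef (char_poly M)^`() = n.+1%:R.
Proof.
move=> nz_n; set ch := char_poly M.
have size_ch : size ch = n.+2 by rewrite size_char_poly.
have coef_n : ch^`()`_n = n.+1%:R.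
  have lead_ch : ch`_n.+1 = 1.
    by rewrite -[n.+1]/(n.+2.-1) -size_ch -lead_coefE (monicP (char_poly_monic M)).
  by rewrite coef_deriv lead_ch.
suff size_d : size ch^`() = n.+1 by rewrite lead_coefE size_d coef_n.
apply/eqP; rewrite eqn_leq; apply/andP; split.
  by rewrite -ltnS -size_ch lt_size_deriv // -size_poly_eq0 size_ch.
by rewrite ltnNge; apply/negP => /(nth_default 0); rewrite coef_n => /eqP; apply/negP.
Qed.

Lemma horner_char_disc (F : numDomainType) n (M : 'M[{poly F}]_n.+1) t :
  (char_disc M).[t] = char_disc (map_mx (horner_eval t) M).
Proof.
have nz_n : n.+1%:R != 0 :> {poly F} by rewrite -polyC_natr polyC_eq0 pnatr_eq0.
rewrite /char_disc -horner_evalE map_resultant.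
- by rewrite -deriv_map map_char_poly.
- by rewrite (monicP (char_poly_monic M)) rmorph1 oner_neq0.
- by rewrite lead_coef_deriv_char_poly // rmorph_nat pnatr_eq0.
Qed.

Lemma diagonalizable_segment r (D : 'rV[CC]_r) (B : 'M[CC]_r) : injective (D 0) ->
  exists d : {poly CC},
    d != 0 /\ forall t, d.[t] != 0 -> diagonalizable (lerpmx t (diag_mx D) B).
Proof.
case: r D B => [|r] D B injD.
  exists 1; split => [|t _]; first exact: oner_neq0.
  by rewrite (thinmx0 (lerpmx _ _ _)); apply: diagonalizable0.
exists (char_disc (segmx (diag_mx D) B)); split => [|t dt].
  (* at t = 0 the matrix is diag D, whose eigenvalues are distinct *)
  have disc0 : (char_disc (segmx (diag_mx D) B)).[0] = char_disc (diag_mx D).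
    by rewrite horner_char_disc map_segmx lerpmx0.
  by apply: contraNneq (char_disc_diag_mx injD) => d0; rewrite -disc0 d0 horner0.
by apply: diagonalizable_char_disc; rewrite -map_segmx -horner_char_disc.
Qed.

(** * Matrices anticommuting with an admissible A *)

Lemma admissible_signed_sum k (a : 'I_k -> CC) (b c : bool) (i j : 'I_k) : admissible a ->
  (-1) ^+ b * a i + (-1) ^+ c * a j = 0 -> i = j /\ c = ~~ b.
Proof.
move=> [nz_a sep_a]; have [<-|ne_ij] := eqVneq i j => S.
  split => //; case: (eqVneq c (~~ b)) => [//|ne_cb]; exfalso.
  have eq_cb : c = b by case: b c ne_cb {S} => [] [].
  move/eqP: S; rewrite eq_cb -mulrDr mulf_eq0 signr_eq0 -mulr2n mulrn_eq0.
  by rewrite (negPf (nz_a i)).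
have [ne1 ne2] := sep_a i j ne_ij; exfalso; move/eqP: S.
case: b; case: c; rewrite ?expr0 ?expr1 ?mulN1r ?mul1r.
- by rewrite -opprD oppr_eq0 addr_eq0 (negPf ne2).
- by rewrite addrC subr_eq0 eq_sym (negPf ne1).
- by rewrite subr_eq0 (negPf ne1).
- by rewrite addr_eq0 (negPf ne2).
Qed.

Lemma diagA_opposite_pair p m (i j : nat) : (i < 2 * p + m)%nat -> (j < 2 * p + m)%nat ->
  diagA_index p i = diagA_index p j -> diagA_sign p j = ~~ diagA_sign p i ->
  [&& (i < 2 * p)%nat, (j < 2 * p)%nat, i./2 == j./2 & i != j].
Proof.
rewrite /diagA_index /diagA_sign => lt_i lt_j.
case: (ltnP i (2 * p)) => [lt_ip|le_pi]; case: (ltnP j (2 * p)) => [lt_jp|le_pj] //=.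
- move=> eq_half sgn; rewrite eq_half eqxx /=.
  by apply: contraPneq sgn => eq_ij; rewrite eq_ij; case: odd.
- by move: lt_ip; rewrite mul2n -ltn_half_double => ? ?; lia.
- by move: lt_jp; rewrite mul2n -ltn_half_double => ? ?; lia.
Qed.

Lemma diagA_entry_neq0 p m r a (i : 'I_(2 * p + m + r)) : admissible a ->
  (i < 2 * p + m)%nat -> diagA p m r a i i != 0.
Proof.
move=> [nz_a _] lt_i; rewrite diagA_entry // mulf_neq0 ?signr_eq0 //.
by rewrite (fnat_lt _ (diagA_index_lt lt_i)).
Qed.

Lemma anticomm_support p m r a B (i j : 'I_(2 * p + m + r)) : admissible a ->
  anticomm (diagA p m r a, B) -> B i j != 0 ->
  [&& (i < 2 * p)%nat, (j < 2 * p)%nat, i./2 == j./2 & i != j :> nat]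
  || ((2 * p + m <= i)%nat && (2 * p + m <= j)%nat).
Proof.
move=> adm ac nz_B.
have /eqP := iffLR (@anticomm_diag _ _ B (@diagA_is_diag p m r a)) ac i j.
rewrite mulf_eq0 (negPf nz_B) orbF => /eqP S.
case: (leqP (2 * p + m) i) => le_i; case: (leqP (2 * p + m) j) => le_j.
- by rewrite orbT.
- move: S; rewrite diagA_entry0 // add0r => /eqP.
  by rewrite (negPf (diagA_entry_neq0 adm le_j)).
- move: S; rewrite (diagA_entry0 _ le_j) addr0 => /eqP.
  by rewrite (negPf (diagA_entry_neq0 adm le_i)).
move: S; rewrite !diagA_entry //.
rewrite (fnat_lt _ (diagA_index_lt le_i)) (fnat_lt _ (diagA_index_lt le_j)).
case/(admissible_signed_sum adm) => [[eq_idx] sgn].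
by rewrite (diagA_opposite_pair le_i le_j eq_idx sgn).
Qed.

Lemma submx_block_diag n1 n2 (A : 'M[CC]_(n1 + n2)) :
  (forall i j, A (lshift n2 i) (rshift n1 j) = 0) ->
  (forall i j, A (rshift n1 i) (lshift n2 j) = 0) ->
  A = block_mx (ulsubmx A) 0 0 (drsubmx A).
Proof.
move=> ur0 dl0; rewrite -{1}(submxK A); congr block_mx; apply/matrixP => i j.
  by rewrite !mxE ur0.
by rewrite !mxE dl0.
Qed.

Lemma diagA_block p m r a : diagA p m r a = block_mx (ulsubmx (diagA p m r a)) 0 0 0.
Proof.
have off_diag (i j : 'I_(2 * p + m + r)) : i != j :> nat -> diagA p m r a i j = 0.
  by move/is_diag_mxP: (@diagA_is_diag p m r a); apply.
rewrite {1}(submx_block_diag (A := diagA p m r a)) => [|i j|i j]; last 2 first.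
- by rewrite off_diag //=; have := ltn_ord i; lia.
- by rewrite off_diag //=; have := ltn_ord j; lia.
congr block_mx; apply/matrixP => i j; rewrite 2![LHS]mxE [RHS]mxE.
have [<-|ne_ij] := eqVneq i j; first by rewrite diagA_entry0 //= leq_addr.
by rewrite off_diag //= eqn_add2l; apply: contra ne_ij => /eqP/val_inj ->.
Qed.

Lemma anticomm_block p m r a B : admissible a -> anticomm (diagA p m r a, B) ->
  B = block_mx (ulsubmx B) 0 0 (drsubmx B).
Proof.
move=> adm ac; apply: submx_block_diag => i j; apply/eqP; apply: contraT;
  by move=> /(anticomm_support adm ac) /=; have := ltn_ord i; have := ltn_ord j; lia.
Qed.

Definition partner (i : nat) : nat := if odd i then i.-1 else i.+1.

Lemma partnerP (i j : nat) : i./2 = j./2 -> i != j -> j = partner i.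
Proof.
move=> eq_half ne_ij; have odd_j := odd_half_partner eq_half ne_ij; rewrite /partner.
move: (odd_double_half i) (odd_double_half j); rewrite eq_half odd_j; move: (j./2) => k.
by case: (odd i) => /= <- <-.
Qed.

Definition fnat_mx n (M : 'M[CC]_n) (i j : nat) : CC := fnat (fun i' => fnat (M i') j) i.

Lemma fnat_mx_ord n (M : 'M[CC]_n) (i j : 'I_n) : fnat_mx M i j = M i j.
Proof. by rewrite /fnat_mx /fnat !valK. Qed.

Definition blockB_coef p m r (B : 'M[CC]_(2 * p + m + r)) (D : 'rV[CC]_r) :
    'I_(2 * p + r) -> CC :=
  fun k => if (k < 2 * p)%nat then fnat_mx B k (partner k) else fnat (D 0) (k - 2 * p).

Lemma blockB_coef_block p m r a B D : admissible a -> anticomm (diagA p m r a, B) ->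
  blockB p m r (blockB_coef B D) = block_mx (ulsubmx B) 0 0 (diag_mx D).
Proof.
move=> adm ac; rewrite -{1}(submxK (blockB p m r _)); congr block_mx;
  apply/matrixP => i j; rewrite !mxE /=.
- case: ifP => [/and4P[/= lt_i lt_j /eqP eq_half ne_ij]|not_pair].
    have lt_i' : (i < 2 * p + r)%nat by lia.
    rewrite (fnat_lt _ lt_i') /blockB_coef /= lt_i -(partnerP eq_half ne_ij).
    by rewrite -[i : nat]/(lshift r i : nat) -[j : nat]/(lshift r j : nat) fnat_mx_ord.
  case: ifP => [/andP[le_i _]|_]; first by have := ltn_ord i; lia.
  apply/esym/eqP; apply: contraFT not_pair => /(anticomm_support adm ac) /=.
  by have := ltn_ord i; lia.
- case: ifP => [/and4P[/= _ lt_j _ _]|_]; first by lia.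
  by case: ifP => [/andP[le_i _]|_] //; have := ltn_ord i; lia.
- case: ifP => [/and4P[/= lt_i _ _ _]|_]; first by lia.
  by case: ifP => [/andP[_ /eqP/(congr1 val) /=]|_] //; have := ltn_ord j; lia.
case: ifP => [/and4P[/= lt_i _ _ _]|_]; first by lia.
rewrite leq_addr /=; have [<-|ne_ij] := eqVneq i j.
  have lt_i : (2 * p + m + i - m < 2 * p + r)%nat by have := ltn_ord i; lia.
  rewrite eqxx mulr1n (fnat_lt _ lt_i) /blockB_coef /=.
  have -> : (2 * p + m + i - m < 2 * p)%nat = false by lia.
  have -> : (2 * p + m + i - m - 2 * p)%nat = i by lia.
  by rewrite (fnat_lt _ (ltn_ord i)); congr (D 0 _); apply: val_inj.
rewrite mulr0n ifN //; apply: contra ne_ij => /eqP/(congr1 val) /= eq_ij.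
by apply/eqP/val_inj => /=; lia.
Qed.

(** * Orbits and the image of phi *)

Lemma invmx_mul (R : comUnitRingType) n (A B : 'M[R]_n) : A \in unitmx -> B \in unitmx ->
  invmx (A *m B) = invmx B *m invmx A.
Proof.
move=> Au Bu; have ABu : A *m B \in unitmx by rewrite unitmx_mul Au Bu.
have inv_AB : (A *m B) *m (invmx B *m invmx A) = 1%:M.
  by rewrite mulmxA -(mulmxA A) mulmxV // mulmx1 mulmxV.
by rewrite -[LHS]mulmx1 -inv_AB mulmxA mulVmx // mul1mx.
Qed.

Lemma conjpair_mul n (g h : 'M[CC]_n) (x : MM n) : g \in unitmx -> h \in unitmx ->
  conjpair (g *m h) x = conjpair g (conjpair h x).
Proof. by move=> gu hu; rewrite /conjpair invmx_mul // !mulmxA. Qed.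

Lemma conjpair_block n1 n2 (Q : 'M[CC]_n2) (A1 A2 : 'M[CC]_n1) (B1 B2 : 'M[CC]_n2) :
  Q \in unitmx ->
  conjpair (block_mx 1%:M 0 0 Q) (block_mx A1 0 0 B1, block_mx A2 0 0 B2) =
  (block_mx A1 0 0 (Q *m B1 *m invmx Q), block_mx A2 0 0 (Q *m B2 *m invmx Q)).
Proof.
move=> Qu; have Q'u : (block_mx 1%:M 0 0 Q : 'M_(n1 + n2)) \in unitmx.
  by rewrite block_diag_mx_unit unitmx1.
rewrite /conjpair /= invmx_block_diag // invmx1.
by rewrite !mulmx_block !(mulmx0, mul0mx, mul1mx, mulmx1, addr0, add0r).
Qed.

Lemma phi_image_irreducible p m r : zariski_irreducible (zariski_closure (phi_image p m r)).
Proof.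
apply: segment_connected_irreducible.
  exists (conjpair 1%:M (diagA p m r (fun=> 0), blockB p m r (fun=> 0))).
  by exists 1%:M, (fun=> 0), (fun=> 0); split => //; apply: unitmx1.
move=> _ _ [g0 [a0 [v0 [g0u ->]]]] [g1 [a1 [v1 [g1u ->]]]].
exists g0, g1, (diagA p m r a0, blockB p m r v0), (diagA p m r a1, blockB p m r v1).
split => // t gt; exists (lerpmx t g0 g1), (lerpv t a0 a1), (lerpv t v0 v1).
by rewrite diagA_lerpv blockB_lerpv.
Qed.

Lemma phi_image_sub_Zpmr p m r x : phi_image p m r x -> Zpmr p m r x.
Proof.
move=> [g [a [v [gu ->]]]].
pose a0 (i : 'I_(p + m)) : CC := i.+1%:R.
have [d [nz_d adm_d]] := admissible_segment a (admissible_succ (p + m)).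
pose x0 := (diagA p m r a0, blockB p m r v).
have Sz t : lerpmx t g g \in unitmx -> d.[t] != 0 ->
    orbits_pmr p m r (conj_segment g g x0 (diagA p m r a, blockB p m r v) t).
  move=> _ dt; exists g, (lerpv t a0 a), (blockB p m r v).
  rewrite /conj_segment /= !lerpmxx -diagA_lerpv.
  by split => //; [apply: adm_d | apply: anticomm_diagA_blockB].
by have := conj_segment_closure nz_d Sz (t := 1); rewrite lerpmxx conj_segment1; apply.
Qed.

Lemma orbits_sub_closure_phi_image p m r x :
  orbits_pmr p m r x -> zariski_closure (phi_image p m r) x.
Proof.
move=> [g [a [B [gu adm ac ->]]]].
pose D0 : 'rV[CC]_r := \row_i (i.+1)%:R.
have injD0 : injective (D0 0).
  by move=> i j; rewrite !mxE => /eqP; rewrite eqr_nat eqSS => /eqP/val_inj.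
have [d [nz_d diag_d]] := diagonalizable_segment (drsubmx B) injD0.
pose B0 := block_mx (ulsubmx B) 0 0 (diag_mx D0).
have lerpB t : lerpmx t B0 B = block_mx (ulsubmx B) 0 0 (lerpmx t (diag_mx D0) (drsubmx B)).
  rewrite {1}(anticomm_block adm ac) /B0 /lerpmx !scale_block_mx add_block_mx.
  by rewrite !scaler0 !addr0 -scalerDl subrK scale1r.
have Sz t : lerpmx t g g \in unitmx -> d.[t] != 0 ->
    phi_image p m r (conj_segment g g (diagA p m r a, B0) (diagA p m r a, B) t).
  move=> _ dt; rewrite /conj_segment /= !lerpmxx lerpB.
  have [P Pu /(diagonalizable_forLR Pu) [D ED]] := diag_d t dt.
  (* conjugating by h diagonalises the last block and fixes diagA *)
  pose h := block_mx 1%:M 0 0 (invmx P) : 'M[CC]_(2 * p + m + r).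
  have hu : h \in unitmx by rewrite block_diag_mx_unit unitmx1 unitmx_inv.
  exists (g *m h), a, (blockB_coef B D); split; first by rewrite unitmx_mul gu hu.
  rewrite conjpair_mul // (blockB_coef_block D adm ac) [in RHS]diagA_block.
  rewrite conjpair_block ?unitmx_inv // mulmx0 mul0mx -diagA_block ED.
  by rewrite mxpoly.conjumx ?unitmx_inv // invmxK.
by have := conj_segment_closure nz_d Sz (t := 1); rewrite lerpmxx conj_segment1; apply.
Qed.

Theorem proposition3p2 (p m r : nat) :
  zariski_irreducible (Zpmr p m r) /\
  Zpmr p m r = zariski_closure (phi_image p m r).
Proof.
have closure_eq : Zpmr p m r = zariski_closure (phi_image p m r).
  apply: zariski_closure_eq => x; first exact: orbits_sub_closure_phi_image.
  exact: phi_image_sub_Zpmr.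
by rewrite closure_eq; split => //; apply: phi_image_irreducible.
Qed.
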